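(* Let $n_1,n_2,n_3$ be integers with $3\le n_1,n_2\le n_3$ and $3\max(n_1,n_2)\le 2n_3\le n_1n_2$. Let $W$ be any set produced by the Middle Cone Construction described below and $u=(n_1+1,n_2+1,n_3+1)$. Then $W$ is a total-dominating set of $K_{n_1}\times K_{n_2}\times K_{n_3}$, and $W\cup\{u\}$ is a total-dominating set of $K_{n_1+1}\times K_{n_2+1}\times K_{n_3+1}$.
   Context: $K_{m_1}\times K_{m_2}\times K_{m_3}$: vertices are triples $(x_1,x_2,x_3)$, $1\le x_i\le m_i$, adjacent iff they differ in every coordinate. A total-dominating set is a vertex set $D$ such that every vertex of the graph is adjacent to some vertex of $D$. Multiplicities: write $n_3=qn_1+r$, $0\le r\le n_1-1$. If $r\le n_1-r$, $(\ell_1,\dots,\ell_{n_1})$ is $(q+1,q)$ repeated $r$ times followed by $n_1-2r$ copies of $q$; if $r>n_1-r$, it is $(q+1,q)$ repeated $n_1-r$ times followed by $2r-n_1$ copies of $q+1$. Let $L_i=\sum_{j<i}\ell_j$; block $i$ is the set of columns $c$ with $L_i<c\le L_i+\ell_i$; $s_i=L_i+1$. Middle Cone Construction: $W=W^L\cup W^R$, each consisting of $n_3$ landmarks indexed by columns $c=1,\dots,n_3$. Left column $c$ in block $i$ is $(i,y^L_c,c)$; right column $c$ in block $i$ is $(i+1,y^R_c,c)$ with $n_1+1$ read as $1$. Even $n_2$, $h=n_2/2$: $y^L_c=((c-1)\bmod h)+1$, $y^R_c=h+((c-1)\bmod h)+1$. Odd $n_2$, $f=(n_2-1)/2$, $k=\#\{i:\ell_i>f\}$: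 let $S=\{s_i:\ell_i>f\}$ if $k\ge2$ and $S=\{1\}$ if $k\le1$. Set $y^L_c=n_2$ for $c\in S$ and fill the other left columns in increasing order with $1,\dots,f,1,\dots,f,\dots$; set $y^R_c=n_2$ for $c\in S+1$ and fill the other right columns in increasing order with $f+1,\dots,2f,f+1,\dots,2f,\dots$. If $k\le1$, additionally change one left landmark of the form $(x,1,z)$ with $x\notin\{1,2,n_1\}$ to $(x,n_2,z)$ (any such choice). *)

From mathcomp Require Import all_boot.
Set Implicit Arguments. Unset Strict Implicit. Unset Printing Implicit Defensive.

Definition vtx := (nat * nat * nat)%type.

Definition is_vertex (m1 m2 m3 : nat) (v : vtx) : Prop :=
  [/\ 0 < v.1.1 <= m1, 0 < v.1.2 <= m2 & 0 < v.2 <= m3].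

Definition adj (v w : vtx) : Prop :=
  [/\ v.1.1 <> w.1.1, v.1.2 <> w.1.2 & v.2 <> w.2].

Definition total_dominating (m1 m2 m3 : nat) (D : vtx -> Prop) : Prop :=
  (forall v, D v -> is_vertex m1 m2 m3 v) /\
  (forall v, is_vertex m1 m2 m3 v -> exists w, D w /\ adj v w).

Section MCC.
Variables n1 n2 n3 : nat.

Definition mq := n3 %/ n1.
Definition mr := n3 %% n1.
(* number of (q+1,q) pairs at the start *)
Definition npairs := if mr <= n1 - mr then mr else n1 - mr.

Definition ell (i : nat) : nat :=
  if i <= 2 * npairs then (if odd i then mq.+1 else mq)
  else (if mr <= n1 - mr then mq else mq.+1).

Definition Lsum (i : nat) : nat := \sum_(1 <= j < i) ell j.

Definition in_block (i c : nat) : bool :=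
  (0 < i <= n1) && (Lsum i < c <= Lsum i + ell i).

Definition sblk (i : nat) : nat := (Lsum i).+1.

Definition hh := n2 %/ 2.
Definition yL_even (c : nat) : nat := (c.-1 %% hh).+1.
Definition yR_even (c : nat) : nat := hh + (c.-1 %% hh).+1.

Definition ff := n2.-1 %/ 2.
Definition kk := count (fun i => ff < ell i) (iota 1 n1).
Definition inS (c : nat) : bool :=
  if 2 <= kk then has (fun i => (ff < ell i) && (c == sblk i)) (iota 1 n1)
  else c == 1.
Definition inS1 (c : nat) : bool := (1 < c) && inS c.-1.

(* other columns filled in increasing order with 1..f,1..f,... *)
Definition yL_odd (c : nat) : nat :=
  if inS c then n2
  else (count (fun c' => ~~ inS c') (iota 1 c.-1) %% ff).+1.
(* other columns filled in increasing order with f+1..2f,f+1..2f,... *)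
Definition yR_odd (c : nat) : nat :=
  if inS1 c then n2
  else ff + (count (fun c' => ~~ inS1 c') (iota 1 c.-1) %% ff).+1.

Definition cone_set (yL yR : nat -> nat) (v : vtx) : Prop :=
  exists c i, 0 < c <= n3 /\ in_block i c /\
    (v = (i, yL c, c) \/ v = ((if i == n1 then 1 else i.+1), yR c, c)).

Definition middle_cone (W : vtx -> Prop) : Prop :=
  if ~~ odd n2 then (forall v, W v <-> cone_set yL_even yR_even v)
  else if 2 <= kk then (forall v, W v <-> cone_set yL_odd yR_odd v)
  else
    (* k <= 1: change one left landmark (x,1,z) with x \notin {1,2,n1}
       to (x,n2,z) (any such choice) *)
    exists c0 x0, [/\ 0 < c0 <= n3, in_block x0 c0, yL_odd c0 = 1,
       x0 \notin [:: 1; 2; n1] &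
       forall v, W v <->
         cone_set (fun c => if c == c0 then n2 else yL_odd c) yR_odd v].

End MCC.

From mathcomp Require Import all_boot zify.
Set Implicit Arguments. Unset Strict Implicit. Unset Printing Implicit Defensive.

(* Every column c carries two landmarks, (i, yL c, c) and (i+1, yR c, c), where
   i is the block of c and yL c <> yR c.  Both landmarks of c miss a vertex
   (x, y, z) only if c = z, or c lies in block x with yR c = y, or c lies in
   block x-1 with yL c = y.  Off the special columns the heights cycle with a
   period f >= n3/n1, while a block has at most n3/n1 + 1 columns, so a height
   occurs at most twice in a block: at most 1 + 2 + 2 = 5 columns miss (x, y, z)
   and n3 >= 6 leaves a good one.  The argument never uses that (x, y, z) is a
   vertex of the smaller graph, so it also covers the larger graph. *)

Section Blocks.
Variables n1 n3 : nat.

Lemma LsumS i : 0 < i -> Lsum n1 n3 i.+1 = Lsum n1 n3 i + ell n1 n3 i.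
Proof. by move=> i_gt0; rewrite /Lsum big_nat_recr. Qed.

Lemma Lsum1 : Lsum n1 n3 1 = 0.
Proof. by rewrite /Lsum big_geq. Qed.

Lemma leq_Lsum i j : 0 < i -> i <= j -> Lsum n1 n3 i <= Lsum n1 n3 j.
Proof.
move=> i_gt0; elim: j => [|j IHj] ij; first by lia.
have [-> //|ne] := eqVneq i j.+1.
have [j_gt0 ij'] : 0 < j /\ i <= j by lia.
by rewrite LsumS //; apply: leq_trans (IHj ij') (leq_addr _ _).
Qed.

Lemma ell_bounds i : n3 %/ n1 <= ell n1 n3 i <= (n3 %/ n1).+1.
Proof. by rewrite /ell /mq; repeat case: ifP; lia. Qed.

Lemma npairs_le : 2 * npairs n1 n3 <= n1.
Proof. by rewrite /npairs; case: ifP; lia. Qed.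

Lemma Lsum_pairs k : k <= npairs n1 n3 ->
  Lsum n1 n3 (2 * k).+1 = k * (2 * (n3 %/ n1) + 1).
Proof.
elim: k => [|k IHk] k_le; first by rewrite Lsum1.
have -> : (2 * k.+1).+1 = (2 * k).+3 by lia.
rewrite LsumS // LsumS // IHk; last by lia.
rewrite /ell /mq !oddS oddM andFb /=.
by rewrite !ifT; lia.
Qed.

Lemma Lsum_total : 0 < n1 -> Lsum n1 n3 n1.+1 = n3.
Proof.
move=> n1_gt0; have p_le := npairs_le.
set p := npairs n1 n3 in p_le *.
rewrite /Lsum (big_cat_nat (n := (2 * p).+1)) //=.
rewrite -/(Lsum n1 n3 (2 * p).+1) Lsum_pairs //.
set tail := if n3 %% n1 <= n1 - n3 %% n1 then n3 %/ n1 else (n3 %/ n1).+1.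
rewrite (eq_big_nat _ _ (F2 := fun=> tail)); last first.
  by move=> j j_gt; rewrite /ell -/p /mr /mq ifN //; lia.
rewrite sum_nat_const_nat /tail /p /npairs /mr /mq.
have := divn_eq n3 n1; have := ltn_pmod n3 n1_gt0.
by case: ifP; nia.
Qed.

Lemma in_block_exists c : 0 < n1 -> 0 < c <= n3 -> exists i, in_block n1 n3 i c.
Proof.
move=> n1_gt0 c_col.
suff /(_ n1 (leqnn n1)) : forall m, m <= n1 -> c <= Lsum n1 n3 m.+1 -> exists i,
    [/\ 0 < i <= m, Lsum n1 n3 i < c & c <= Lsum n1 n3 i + ell n1 n3 i].
  rewrite Lsum_total // => /(_ (proj2 (andP c_col))) [i [i_range lo hi]].
  by exists i; rewrite /in_block i_range lo hi.
elim=> [|m IHm] m_le c_le; first by move: c_le; rewrite Lsum1; lia.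
have [c_le'|c_gt] := leqP c (Lsum n1 n3 m.+1).
  by have [i [? ? ?]] := IHm (ltnW m_le) c_le'; exists i; split => //; lia.
by exists m.+1; rewrite -LsumS //; split => //; lia.
Qed.

Lemma in_block_unique i j c : in_block n1 n3 i c -> in_block n1 n3 j c -> i = j.
Proof.
wlog ij : i j / i <= j => [wlog_ij ic jc|].
  by case: (leqP i j) => [|/ltnW] ij; [|apply/esym]; apply: wlog_ij.
rewrite /in_block => /andP[/andP[i_gt0 _] /andP[lo_i hi_i]] /andP[_ /andP[lo_j _]].
have [//|ne] := eqVneq i j.
have := leq_Lsum (i := i.+1) isT (_ : i < j); rewrite LsumS //; lia.
Qed.

Lemma in_block_gt0 i c : in_block n1 n3 i c -> 0 < c.
Proof. by rewrite /in_block => /andP[_ /andP[lo _]]; lia. Qed.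

Lemma in_block_spread i a d : in_block n1 n3 i a -> in_block n1 n3 i d ->
  d <= a + n3 %/ n1.
Proof.
rewrite /in_block => /andP[_ /andP[lo_a _]] /andP[_ /andP[_ hi_d]].
by have := ell_bounds i; lia.
Qed.

Lemma in_block_leq i c : 0 < n3 %/ n1 -> in_block n1 n3 i c -> i <= c.
Proof.
move=> q_gt0 /andP[/andP[i_gt0 _] /andP[lo _]].
suff : i.-1 <= Lsum n1 n3 i by lia.
elim: i i_gt0 {lo} => [//|[|i] IHi] _; first by rewrite Lsum1.
by rewrite LsumS //; have := IHi isT; have := ell_bounds i.+1; lia.
Qed.

Lemma sblk_in_block j : 0 < j <= n1 -> 0 < ell n1 n3 j ->
  in_block n1 n3 j (sblk n1 n3 j).
Proof. by move=> j_range ell_gt0; rewrite /in_block /sblk j_range /=; lia. Qed.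

Lemma sblkS_in_block j : 0 < j <= n1 -> 1 < ell n1 n3 j ->
  in_block n1 n3 j (sblk n1 n3 j).+1.
Proof. by move=> j_range ell_gt1; rewrite /in_block /sblk j_range /=; lia. Qed.

End Blocks.

Lemma count_iota_le2 (P : pred nat) m n :
  (forall a b d, a < b -> b < d -> P a -> P b -> P d -> False) ->
  count P (iota m n) <= 2.
Proof.
move=> no_triple; rewrite -size_filter.
have := filter_all P (iota m n).
have := sorted_filter ltn_trans P (iota_ltn_sorted m n).
case: (filter P _) => [|a [|b [|d t]]] //= /and3P[ab bd _] /and4P[Pa Pb Pd _].
by case: (no_triple a b d ab bd Pa Pb Pd).
Qed.

Lemma count_orb_le (T : Type) (a b : pred T) s :
  count (fun x => a x || b x) s <= count a s + count b s.
Proof. by rewrite -(count_predUI a b); apply: leq_addr. Qed.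

Definition block_triple_free n1 n3 (Y : nat -> nat) : Prop :=
  forall i a b d, a < b -> b < d ->
    in_block n1 n3 i a -> in_block n1 n3 i b -> in_block n1 n3 i d ->
    Y a = Y b -> Y b = Y d -> False.

Lemma eq_block_triple_free n1 n3 (Y Y' : nat -> nat) :
  Y =1 Y' -> block_triple_free n1 n3 Y' -> block_triple_free n1 n3 Y.
Proof.
by move=> eY free i a b d ab bd ia ib id; rewrite !eY; apply: free ab bd ia ib id.
Qed.

Lemma block_triple_free_count n1 n3 Y i y : block_triple_free n1 n3 Y ->
  count (fun c => in_block n1 n3 i c && (Y c == y)) (iota 1 n3) <= 2.
Proof.
move=> free; apply: count_iota_le2 => a b d ab bd.
move=> /andP[ia /eqP <-] /andP[ib /eqP Yb] /andP[id /eqP Yd].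
exact: free ab bd ia ib id (esym Yb) (etrans Yb (esym Yd)).
Qed.

Lemma block_triple_free_update n1 n3 Y N c0 c1 :
  block_triple_free n1 n3 Y -> (forall c, Y c = N -> c = c1) ->
  block_triple_free n1 n3 (fun c => if c == c0 then N else Y c).
Proof.
move=> free YN i a b d ab bd ia ib id.
pose Y' c := if c == c0 then N else Y c; rewrite -/(Y' a) -/(Y' b) -/(Y' d).
have Y'N c : Y' c = N -> c = c0 \/ c = c1.
  by rewrite /Y'; case: eqP => [->|_ /YN ->]; [left|right].
have Y'E c : Y' c <> N -> Y' c = Y c by rewrite /Y'; case: eqP.
move=> eab ebd; have [bN|bN] := eqVneq (Y' b) N.
  move: (Y'N a (etrans eab bN)) (Y'N b bN) (Y'N d (etrans (esym ebd) bN)); lia.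
have aN : Y' a <> N by rewrite eab; apply/eqP.
have dN : Y' d <> N by rewrite -ebd; apply/eqP.
apply: (free i a b d) => //.
  by rewrite -(Y'E a aN) -(Y'E b (elimN eqP bN)).
by rewrite -(Y'E d dN) -(Y'E b (elimN eqP bN)).
Qed.

Definition next_block n1 i := if i == n1 then 1 else i.+1.
Definition prev_block n1 x := if x == 1 then n1 else x.-1.

Lemma prev_next_block n1 i : 0 < i <= n1 -> prev_block n1 (next_block n1 i) = i.
Proof. by rewrite /prev_block /next_block; case: ifP; case: ifP; lia. Qed.

Lemma next_block_neq n1 i : 1 < n1 -> 0 < i <= n1 -> next_block n1 i != i.
Proof. by rewrite /next_block; case: ifP; lia. Qed.

Section Domination.
Variables (n1 n3 : nat) (yL yR : nat -> nat).
Hypotheses (n1_gt1 : 1 < n1) (n3_ge6 : 6 <= n3).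
Hypothesis yL_neq_yR : forall c, 0 < c <= n3 -> yL c <> yR c.
Hypotheses (yL_free : block_triple_free n1 n3 yL) (yR_free : block_triple_free n1 n3 yR).

Lemma cone_column_adj x y z c : 0 < c <= n3 -> c != z ->
  ~~ (in_block n1 n3 x c && (yR c == y)) ->
  ~~ (in_block n1 n3 (prev_block n1 x) c && (yL c == y)) ->
  exists w, cone_set n1 n3 yL yR w /\ adj (x, y, z) w.
Proof.
move=> c_col cz badR badL.
have [i ic] := in_block_exists (ltnW n1_gt1) c_col.
have i_range : 0 < i <= n1 by case/andP: ic.
have landL : i != x -> yL c != y -> exists w, cone_set n1 n3 yL yR w /\ adj (x, y, z) w.
  move=> ix Ly; exists (i, yL c, c); split; first by exists c, i; do 2!split => //; left.
  by split; apply/eqP; rewrite eq_sym.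
have landR : next_block n1 i != x -> yR c != y ->
    exists w, cone_set n1 n3 yL yR w /\ adj (x, y, z) w.
  move=> ix Ry; exists (next_block n1 i, yR c, c).
  split; first by exists c, i; do 2!split => //; right.
  by split; apply/eqP; rewrite eq_sym.
have [ix|ix] := eqVneq i x.
  by subst x; apply: landR; [apply: next_block_neq | move: badR; rewrite ic].
have [Ly|Ly] := eqVneq (yL c) y; last exact: landL.
apply: landR; last by rewrite -Ly eq_sym; apply/eqP; apply: yL_neq_yR.
by apply: contra badL => /eqP <-; rewrite prev_next_block // ic Ly eqxx.
Qed.

Lemma cone_set_adj_exists x y z : exists w, cone_set n1 n3 yL yR w /\ adj (x, y, z) w.
Proof.
pose badR c := in_block n1 n3 x c && (yR c == y).
pose badL c := in_block n1 n3 (prev_block n1 x) c && (yL c == y).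
pose bad c := (c == z) || (badR c || badL c).
have z_once : count (fun c => c == z) (iota 1 n3) <= 1.
  by have := count_uniq_mem z (iota_uniq 1 n3); rewrite /= => ->; apply: leq_b1.
have bad_le5 : count bad (iota 1 n3) <= 1 + (2 + 2).
  apply: leq_trans (count_orb_le _ _ _) (leq_add z_once _).
  apply: leq_trans (count_orb_le _ _ _) (leq_add _ _); exact: block_triple_free_count.
have : has (predC bad) (iota 1 n3).
  by rewrite has_count; have := count_predC bad (iota 1 n3); rewrite size_iota; lia.
case/hasP => c; rewrite mem_iota /bad /= !negb_or => c_col /and3P[cz nR nL].
by apply: (cone_column_adj (c := c)) => //; lia.
Qed.

End Domination.

Definition admissible_heights n1 n2 n3 (yL yR : nat -> nat) : Prop :=
  [/\ forall c, 0 < c <= n3 -> yL c <> yR c,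
      forall c, 0 < c <= n3 -> 0 < yL c <= n2,
      forall c, 0 < c <= n3 -> 0 < yR c <= n2,
      block_triple_free n1 n3 yL & block_triple_free n1 n3 yR].

Lemma cone_total_dominating n1 n2 n3 yL yR (W : vtx -> Prop) :
  1 < n1 -> 6 <= n3 -> admissible_heights n1 n2 n3 yL yR ->
  (forall v, W v <-> cone_set n1 n3 yL yR v) ->
  total_dominating n1 n2 n3 W /\
  total_dominating n1.+1 n2.+1 n3.+1 (fun v => W v \/ v = (n1.+1, n2.+1, n3.+1)).
Proof.
move=> n1_gt1 n3_ge6 [neq rngL rngR freeL freeR] hW.
have W_vertex v : W v -> is_vertex n1 n2 n3 v.
  case/hW => c [i [c_col [/andP[i_range _] [->|->]]]].
    by have := rngL c c_col; split => /=; lia.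
  by have := rngR c c_col; rewrite /is_vertex /=; case: eqP; split; lia.
have dom x y z : exists w, W w /\ adj (x, y, z) w.
  have [w [/hW Ww adj_w]] := cone_set_adj_exists n1_gt1 n3_ge6 neq freeL freeR x y z.
  by exists w.
split; split.
- exact: W_vertex.
- by move=> [[x y] z] _; apply: dom.
- by move=> v [/W_vertex [? ? ?]|->]; split => /=; lia.
- by move=> [[x y] z] _; have [w [Ww adj_w]] := dom x y z; exists w; split => //; left.
Qed.

Definition fill_heights (s : pred nat) (base f N c : nat) : nat :=
  if s c then N else base + (count (fun c' => ~~ s c') (iota 1 c.-1) %% f).+1.

Section FillHeights.
Variables (s : pred nat) (base f N : nat).
Hypothesis f_gt0 : 0 < f.
Local Notation Y := (fill_heights s base f N).

Lemma fill_heights_bounds c : ~~ s c -> base < Y c <= base + f.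
Proof.
move=> sc; rewrite /fill_heights (negbTE sc).
by have := ltn_pmod (count (fun c' => ~~ s c') (iota 1 c.-1)) f_gt0; lia.
Qed.

Lemma fill_heights_range c : 0 < N -> base + f <= N -> 0 < Y c <= N.
Proof.
move=> N_gt0 N_ge; have [sc|sc] := boolP (s c); first by rewrite /fill_heights sc; lia.
by have := fill_heights_bounds sc; lia.
Qed.

Lemma fill_heights_top c : base + f < N -> Y c = N -> s c.
Proof. by move=> N_gt; have [//|sc] := boolP (s c); have := fill_heights_bounds sc; lia. Qed.

End FillHeights.

Lemma eqn_mod_gap f m n : 0 < f -> m < n -> m = n %[mod f] -> m + f <= n.
Proof.
move=> f_gt0 mn /esym/eqP; rewrite eqn_mod_dvd ?(ltnW mn) // => /(dvdn_leq _).
by rewrite subn_gt0 mn => /(_ isT); lia.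
Qed.

Lemma count_iota_step (p : pred nat) a b : 0 < a -> a < b -> p a ->
  count p (iota 1 a.-1) < count p (iota 1 b.-1) <= count p (iota 1 a.-1) + (b - a).
Proof.
move=> a_gt0 ab pa.
have -> : b.-1 = a.-1 + (b - a).-1.+1 by lia.
rewrite iotaD count_cat add1n prednK //= pa /=.
by have := count_size p (iota a.+1 (b - a).-1); rewrite size_iota; lia.
Qed.

Lemma fill_heights_triple_free n1 n3 (s : pred nat) base f N :
  0 < f -> n3 %/ n1 <= f -> base + f < N ->
  (forall i c c', in_block n1 n3 i c -> in_block n1 n3 i c' -> s c -> s c' -> c = c') ->
  block_triple_free n1 n3 (fill_heights s base f N).
Proof.
move=> f_gt0 q_le N_gt s_unique i a b d ab bd ia ib id eab ebd.
have Ys c : s c -> fill_heights s base f N c = N by rewrite /fill_heights => ->.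
have [sb|nsb] := boolP (s b).
  have sa : s a by apply: (fill_heights_top f_gt0 N_gt); rewrite eab Ys.
  by have := s_unique i a b ia ib sa sb; lia.
have nsa : ~~ s a.
  by apply: contra nsb => sa; apply: (fill_heights_top f_gt0 N_gt); rewrite -eab Ys.
have nsd : ~~ s d.
  by apply: contra nsb => sd; apply: (fill_heights_top f_gt0 N_gt); rewrite ebd Ys.
move: eab ebd; rewrite /fill_heights (negbTE nsa) (negbTE nsb) (negbTE nsd).
move=> /addnI/succn_inj e_ab /addnI/succn_inj e_bd.
have a_gt0 := in_block_gt0 ia.
have /andP[lt_ab _] := count_iota_step (p := fun c => ~~ s c) a_gt0 ab nsa.
have /andP[lt_bd _] := count_iota_step (p := fun c => ~~ s c) (ltn_trans a_gt0 ab) bd nsb.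
have /andP[_ le_ad] := count_iota_step (p := fun c => ~~ s c) a_gt0 (ltn_trans ab bd) nsa.
have := eqn_mod_gap f_gt0 lt_ab e_ab; have := eqn_mod_gap f_gt0 lt_bd e_bd.
by have := in_block_spread ia id; lia.
Qed.

Lemma fill_heights_neq sL sR f N c : 0 < f -> 2 * f < N -> ~~ (sL c && sR c) ->
  fill_heights sL 0 f N c <> fill_heights sR f f N c.
Proof.
move=> f_gt0 N_gt; have [sLc|sLc] := boolP (sL c); have [sRc|sRc] := boolP (sR c) => // _.
- by rewrite {1}/fill_heights sLc; have := fill_heights_bounds f N f_gt0 sRc; lia.
- by rewrite {2}/fill_heights sRc; have := fill_heights_bounds 0 N f_gt0 sLc; lia.
- have := fill_heights_bounds 0 N f_gt0 sLc.
  by have := fill_heights_bounds f N f_gt0 sRc; lia.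
Qed.

Lemma yL_evenE n2 : yL_even n2 =1 fill_heights xpred0 0 (hh n2) n2.+1.
Proof.
by move=> c; rewrite /fill_heights /yL_even (eq_count (a2 := predT)) // count_predT size_iota.
Qed.

Lemma yR_evenE n2 : yR_even n2 =1 fill_heights xpred0 (hh n2) (hh n2) n2.+1.
Proof.
by move=> c; rewrite /fill_heights /yR_even (eq_count (a2 := predT)) // count_predT size_iota.
Qed.

Lemma even_heights_admissible n1 n2 n3 :
  0 < n2 -> ~~ odd n2 -> n3 %/ n1 <= n2 %/ 2 ->
  admissible_heights n1 n2 n3 (yL_even n2) (yR_even n2).
Proof.
move=> n2_gt0 n2_even q_le.
have h_gt0 : 0 < hh n2 by rewrite /hh; lia.
have n2E : n2 = 2 * hh n2 by rewrite /hh; lia.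
have heights_lt c : c.-1 %% hh n2 < hh n2 := ltn_pmod _ h_gt0.
have free base : base <= hh n2 ->
    block_triple_free n1 n3 (fill_heights xpred0 base (hh n2) n2.+1).
  by move=> base_le; apply: fill_heights_triple_free => //; rewrite /hh; lia.
split.
- by move=> c _; rewrite /yL_even /yR_even; have := heights_lt c; lia.
- by move=> c _; rewrite /yL_even; have := heights_lt c; lia.
- by move=> c _; rewrite /yR_even; have := heights_lt c; lia.
- exact: eq_block_triple_free (yL_evenE n2) (free 0 (leq0n _)).
- exact: eq_block_triple_free (yR_evenE n2) (free _ (leqnn _)).
Qed.

Lemma admissible_heights_update n1 n2 n3 yL yR c0 c1 : 0 < n2 ->
  admissible_heights n1 n2 n3 yL yR -> (forall c, yL c = n2 -> c = c1) ->
  yR c0 <> n2 ->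
  admissible_heights n1 n2 n3 (fun c => if c == c0 then n2 else yL c) yR.
Proof.
move=> n2_gt0 [neq rngL rngR freeL freeR] yL_top yR_c0; split => //.
- by move=> c c_col; case: eqP => [->|_]; [apply: nesym | apply: neq].
- by move=> c c_col; case: eqP => _; [lia | apply: rngL].
- exact: block_triple_free_update freeL yL_top.
Qed.

Section OddHeights.
Variables n1 n2 n3 : nat.

Lemma inS_small c : kk n1 n2 n3 < 2 -> inS n1 n2 n3 c = (c == 1).
Proof. by move=> k_lt2; rewrite /inS leqNgt k_lt2. Qed.

Lemma inS_big c : 2 <= kk n1 n2 n3 -> inS n1 n2 n3 c ->
  exists j, [/\ 0 < j <= n1, ff n2 < ell n1 n3 j & c = sblk n1 n3 j].
Proof.
move=> k_ge2; rewrite /inS k_ge2 => /hasP[j].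
rewrite mem_iota => j_range /andP[ell_j /eqP ->].
by exists j; split => //; lia.
Qed.

Lemma inS_block_unique i c c' : in_block n1 n3 i c -> in_block n1 n3 i c' ->
  inS n1 n2 n3 c -> inS n1 n2 n3 c' -> c = c'.
Proof.
move=> ic ic'; have [k_ge2|k_lt2] := leqP 2 (kk n1 n2 n3); last first.
  by rewrite !inS_small // => /eqP -> /eqP ->.
move=> /(inS_big k_ge2)[j [j_range ell_j cj]] /(inS_big k_ge2)[j' [j'_range ell_j' c'j']].
subst c c'.
have <- := in_block_unique ic (sblk_in_block j_range (leq_ltn_trans (leq0n _) ell_j)).
by rewrite -(in_block_unique ic' (sblk_in_block j'_range (leq_ltn_trans (leq0n _) ell_j'))).
Qed.

Hypotheses (n2_odd : odd n2) (n2_ge3 : 3 <= n2).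

Lemma ff_gt0 : 0 < ff n2.
Proof. by rewrite /ff; lia. Qed.

Lemma inS1_block_unique i c c' : in_block n1 n3 i c -> in_block n1 n3 i c' ->
  inS1 n1 n2 n3 c -> inS1 n1 n2 n3 c' -> c = c'.
Proof.
move=> ic ic'; rewrite /inS1; have [k_ge2|k_lt2] := leqP 2 (kk n1 n2 n3); last first.
  by rewrite !inS_small //; lia.
move=> /andP[c_gt1 /(inS_big k_ge2)[j [j_range ell_j cj]]].
move=> /andP[c'_gt1 /(inS_big k_ge2)[j' [j'_range ell_j' c'j']]].
have cE : c = (sblk n1 n3 j).+1 by lia.
have c'E : c' = (sblk n1 n3 j').+1 by lia.
rewrite cE c'E in ic ic' *.
have <- := in_block_unique ic (sblkS_in_block j_range (leq_ltn_trans ff_gt0 ell_j)).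
by rewrite -(in_block_unique ic' (sblkS_in_block j'_range (leq_ltn_trans ff_gt0 ell_j'))).
Qed.

Lemma inS_inS1 c : ~~ (inS n1 n2 n3 c && inS1 n1 n2 n3 c).
Proof.
apply/negP => /andP[Sc /andP[c_gt1 Sc1]].
have [k_ge2|k_lt2] := leqP 2 (kk n1 n2 n3); last by move: Sc Sc1; rewrite !inS_small //; lia.
move: Sc Sc1 => /(inS_big k_ge2)[j [j_range ell_j cj]].
move=> /(inS_big k_ge2)[j' [j'_range ell_j' c'j']].
have jc : in_block n1 n3 j c by rewrite cj; apply: sblk_in_block => //; lia.
have c_eq : c = (sblk n1 n3 j').+1 by lia.
have j'c : in_block n1 n3 j' c.
  by rewrite c_eq; apply: sblkS_in_block j'_range (leq_ltn_trans ff_gt0 ell_j').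
by have jj' := in_block_unique jc j'c; subst j'; lia.
Qed.

Hypothesis q_le : n3 %/ n1 <= n2 %/ 2.

Lemma yL_oddE : yL_odd n1 n2 n3 =1 fill_heights (inS n1 n2 n3) 0 (ff n2) n2.
Proof. by move=> c; rewrite /yL_odd /fill_heights add0n. Qed.

Lemma yR_oddE : yR_odd n1 n2 n3 =1 fill_heights (inS1 n1 n2 n3) (ff n2) (ff n2) n2.
Proof. by []. Qed.

Lemma odd_heights_admissible :
  admissible_heights n1 n2 n3 (yL_odd n1 n2 n3) (yR_odd n1 n2 n3).
Proof.
have f_gt0 := ff_gt0.
have qf : n3 %/ n1 <= ff n2 by rewrite /ff; lia.
split.
- move=> c _; rewrite yL_oddE yR_oddE.
  by apply: fill_heights_neq (inS_inS1 c); rewrite // /ff; lia.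
- by move=> c _; rewrite yL_oddE; apply: fill_heights_range; rewrite // /ff; lia.
- by move=> c _; rewrite yR_oddE; apply: fill_heights_range; rewrite // /ff; lia.
- apply: eq_block_triple_free yL_oddE (fill_heights_triple_free f_gt0 qf _ inS_block_unique).
  by rewrite /ff; lia.
- apply: eq_block_triple_free yR_oddE (fill_heights_triple_free f_gt0 qf _ inS1_block_unique).
  by rewrite /ff; lia.
Qed.

Lemma odd_updated_heights_admissible c0 x0 :
  0 < n1 <= n3 -> kk n1 n2 n3 < 2 -> in_block n1 n3 x0 c0 -> x0 \notin [:: 1; 2; n1] ->
  admissible_heights n1 n2 n3
    (fun c => if c == c0 then n2 else yL_odd n1 n2 n3 c) (yR_odd n1 n2 n3).
Proof.
move=> n1_range k_lt2 x0c0 x0_far.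
have N_gt base : base <= ff n2 -> base + ff n2 < n2 by rewrite /ff; lia.
apply: (admissible_heights_update (c1 := 1)) odd_heights_admissible _ _; first by lia.
  move=> c yLc; apply/eqP; rewrite -inS_small //.
  by apply: (fill_heights_top ff_gt0 (N_gt 0 (leq0n _))); rewrite -yL_oddE.
(* Only column 2 has right height n2, and it lies in block 1 or 2. *)
move=> /(fill_heights_top ff_gt0 (N_gt _ (leqnn _))).
rewrite /inS1 inS_small // => c0_eq2.
have q_gt0 : 0 < n3 %/ n1 by rewrite divn_gt0; lia.
have := in_block_leq q_gt0 x0c0; have := in_block_gt0 x0c0.
by move: x0c0 x0_far c0_eq2; rewrite /in_block !inE; lia.
Qed.

End OddHeights.

Theorem mainTheorem11 (n1 n2 n3 : nat) (W : vtx -> Prop) :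
  3 <= n1 -> 3 <= n2 -> n1 <= n3 -> n2 <= n3 ->
  3 * maxn n1 n2 <= 2 * n3 -> 2 * n3 <= n1 * n2 ->
  middle_cone n1 n2 n3 W ->
  total_dominating n1 n2 n3 W /\
  total_dominating n1.+1 n2.+1 n3.+1
    (fun v => W v \/ v = (n1.+1, n2.+1, n3.+1)).
Proof.
move=> n1_ge3 n2_ge3 n1_le_n3 n2_le_n3 max_le prod_ge.
have n3_ge6 : 6 <= n3 by nia.
have q_le : n3 %/ n1 <= n2 %/ 2 by nia.
have dominating := @cone_total_dominating n1 n2 n3 _ _ W (ltnW n1_ge3) n3_ge6.
rewrite /middle_cone; case: ifPn => [n2_even|].
  by apply/dominating/even_heights_admissible; lia.
rewrite negbK => n2_odd; case: ifPn => [_|]; first exact/dominating/odd_heights_admissible.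
rewrite -ltnNge => k_lt2 [c0 [x0 [_ x0c0 _ x0_far hW]]].
by apply: dominating hW; apply: odd_updated_heights_admissible x0c0 x0_far; lia.
Qed.
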